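(* Let $\mathbf G_*=(\partial:G_1\to G_0)$ be a crossed module, and let $\mathsf H^0(G_0,G_1)=\{a\in G_1:{}^xa=a\ \forall x\in G_0\}$. Then $\partial$ maps $\mathsf H^0(G_0,G_1)$ into $\mathsf Z_{G_1}(G_0)$, and $\partial:\mathsf H^0(G_0,G_1)\to\mathsf Z_{G_1}(G_0)$ with trivial action is a crossed module $\mathbf Z^{Nor}_*(\mathbf G_* )$. Setting $j_1$ to be the inclusion $\mathsf H^0(G_0,G_1)\subseteq G_1$ and $j_0(x)=(x,\mathbf 1)$, the pair $j_*=(j_1,j_0)$ is an injective morphism of crossed modules $\mathbf Z^{Nor}_*(\mathbf G_* )\to\mathbf Z_*(\mathbf G_* )$ which induces an isomorphism on $\pi_1$ and a monomorphism on $\pi_0$.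
   Context: A crossed module: groups $H_1,H_0$, a homomorphism $\partial:H_1\to H_0$ and a left action $(x,a)\mapsto{}^xa$ of $H_0$ on $H_1$ by automorphisms, with $\partial({}^x a)=x\partial(a)x^{-1}$ and ${}^{\partial(b)}a=bab^{-1}$; $\pi_0=H_0/\mathrm{Im}\partial$, $\pi_1=\ker\partial$. A morphism of crossed modules $(\alpha_1,\alpha_0)$ consists of homomorphisms commuting with $\partial$ and satisfying $\alpha_1({}^xa)={}^{\alpha_0(x)}\alpha_1(a)$. $\mathsf Z_{G_1}(G_0)$ is the set of elements $x$ of the centre of $G_0$ with ${}^xa=a$ for all $a\in G_1$. Commutators $[x,t]=xtx^{-1}t^{-1}$. $\mathbf Z_0(\mathbf G_* )$ is the group of pairs $(x,\xi)$, $x\in G_0$, $\xi:G_0\to G_1$ with $\partial\xi(t)=[x,t]$, $\xi(\partial a)={}^xa\,a^{-1}$, $\xi(st)=\xi(s)\,{}^s\xi(t)$, product $(x,\xi)(y,\eta)=(xy,t\mapsto{}^x\eta(t)\xi(t))$; $\mathbf 1$ is the constant map with value $1$. $\mathbf Z_*(\mathbf G_* )$ is the crossed module $\delta:G_1\to\mathbf Z_0(\mathbf G_* )$, $\delta(c)=(\partial c,\ t\mapsto c\,({}^tc)^{-1})$, with action ${}^{(x,\xi)}a={}^xa$. *)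

(* groups here are arbitrary (possibly infinite), so we work
   with carrier types equipped with operations, and subgroups given as
   Prop-valued predicates on an ambient carrier. *)

Set Implicit Arguments.

(* A carrier with group operations (axioms are imposed separately, on a subset). *)
Record grpops := GrpOps {
  gcar :> Type;
  gmul : gcar -> gcar -> gcar;
  gone : gcar;
  ginv : gcar -> gcar }.
Arguments gmul {g}.
Arguments gone {g}.
Arguments ginv {g}.

Definition is_group_on {G : grpops} (S : G -> Prop) : Prop :=
  S gone /\
  (forall x y, S x -> S y -> S (gmul x y)) /\
  (forall x, S x -> S (ginv x)) /\
  (forall x y z, S x -> S y -> S z -> gmul x (gmul y z) = gmul (gmul x y) z) /\
  (forall x, S x -> gmul gone x = x /\ gmul x gone = x) /\
  (forall x, S x -> gmul (ginv x) x = gone /\ gmul x (ginv x) = gone).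

Definition is_hom_on {G H : grpops} (S : G -> Prop) (f : G -> H) : Prop :=
  forall x y, S x -> S y -> f (gmul x y) = gmul (f x) (f y).

Definition inj_on {A B : Type} (S : A -> Prop) (f : A -> B) : Prop :=
  forall x y, S x -> S y -> f x = f y -> x = y.

Record xdata := XData {
  xG1 : grpops;
  xG0 : grpops;
  xS1 : xG1 -> Prop;
  xS0 : xG0 -> Prop;
  xd : xG1 -> xG0;
  xact : xG0 -> xG1 -> xG1 }.

Definition is_xmod (X : xdata) : Prop :=
  let S1 := xS1 X in let S0 := xS0 X in let d := xd X in let act := xact X in
  is_group_on S1 /\ is_group_on S0 /\
  (forall a, S1 a -> S0 (d a)) /\ is_hom_on S1 d /\
  (forall x a, S0 x -> S1 a -> S1 (act x a)) /\
  (forall a, S1 a -> act gone a = a) /\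
  (forall x y a, S0 x -> S0 y -> S1 a -> act (gmul x y) a = act x (act y a)) /\
  (forall x a b, S0 x -> S1 a -> S1 b -> act x (gmul a b) = gmul (act x a) (act x b)) /\
  (forall x a, S0 x -> S1 a -> d (act x a) = gmul (gmul x (d a)) (ginv x)) /\
  (forall a b, S1 a -> S1 b -> act (d b) a = gmul (gmul b a) (ginv b)).

Definition is_xmod_morphism (X Y : xdata) (f1 : xG1 X -> xG1 Y) (f0 : xG0 X -> xG0 Y) : Prop :=
  (forall a, xS1 X a -> xS1 Y (f1 a)) /\
  (forall x, xS0 X x -> xS0 Y (f0 x)) /\
  is_hom_on (xS1 X) f1 /\ is_hom_on (xS0 X) f0 /\
  (forall a, xS1 X a -> xd Y (f1 a) = f0 (xd X a)) /\
  (forall x a, xS0 X x -> xS1 X a -> f1 (xact X x a) = xact Y (f0 x) (f1 a)).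

Definition induces_iso_pi1 (X Y : xdata) (f1 : xG1 X -> xG1 Y) : Prop :=
  inj_on (fun a => xS1 X a /\ xd X a = gone) f1 /\
  (forall b, xS1 Y b -> xd Y b = gone ->
     exists a, xS1 X a /\ xd X a = gone /\ f1 a = b).

(* The map induced on pi_0 = S0 / Im d is injective. *)
Definition induces_mono_pi0 (X Y : xdata) (f0 : xG0 X -> xG0 Y) : Prop :=
  forall x y, xS0 X x -> xS0 X y ->
    (exists b, xS1 Y b /\ f0 x = gmul (f0 y) (xd Y b)) ->
    exists a, xS1 X a /\ x = gmul y (xd X a).

Section Constructions.
Variables (G1 G0 : grpops) (d : G1 -> G0) (act : G0 -> G1 -> G1).

Definition comm (x t : G0) : G0 := gmul (gmul (gmul x t) (ginv x)) (ginv t).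

Definition H0set (a : G1) : Prop := forall x : G0, act x a = a.

Definition ZGset (x : G0) : Prop :=
  (forall t : G0, gmul x t = gmul t x) /\ (forall a : G1, act x a = a).

(* Z_0(G_* ) : ambient type G0 * (G0 -> G1) with its group operations *)
Definition Z0mul (p q : G0 * (G0 -> G1)) : G0 * (G0 -> G1) :=
  (gmul (fst p) (fst q), fun t => gmul (act (fst p) ((snd q) t)) ((snd p) t)).
Definition Z0one : G0 * (G0 -> G1) := (gone, fun _ => gone).
Definition Z0inv (p : G0 * (G0 -> G1)) : G0 * (G0 -> G1) :=
  (ginv (fst p), fun t => act (ginv (fst p)) (ginv ((snd p) t))).
Definition Z0ops : grpops := GrpOps Z0mul Z0one Z0inv.

Definition Z0set (p : Z0ops) : Prop :=
  (forall t, d ((snd p) t) = comm (fst p) t) /\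
  (forall a, (snd p) (d a) = gmul (act (fst p) a) (ginv a)) /\
  (forall s t, (snd p) (gmul s t) = gmul ((snd p) s) (act s ((snd p) t))).

Definition delta (c : G1) : Z0ops := (d c, fun t => gmul c (ginv (act t c))).

Definition Gstar : xdata := XData G1 G0 (fun _ => True) (fun _ => True) d act.

Definition ZNor : xdata := XData G1 G0 H0set ZGset d (fun _ a => a).

Definition Zstar : xdata :=
  XData G1 Z0ops (fun _ => True) Z0set delta (fun p a => act (fst p) a).

Definition j1 : G1 -> G1 := fun a => a.
Definition j0 (x : G0) : Z0ops := (x, fun _ => gone).

End Constructions.

Arguments H0set {G1 G0} act a.
Arguments ZGset {G1 G0} act x.
Arguments Gstar {G1 G0} d act.
Arguments ZNor {G1 G0} d act.
Arguments Zstar {G1 G0} d act.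
Arguments Z0set {G1 G0} d act p.
Arguments delta {G1 G0} d act c.

From Stdlib Require Import FunctionalExtensionality Setoid.

Section GroupLaws.
Context {G : grpops}.
Hypothesis gG : is_group_on (fun _ : G => True).

Lemma g_assoc (x y z : G) : gmul x (gmul y z) = gmul (gmul x y) z.
Proof. destruct gG as (_ & _ & _ & h & _). apply h; exact I. Qed.

Lemma g_one_l (x : G) : gmul gone x = x.
Proof. destruct gG as (_ & _ & _ & _ & h & _). apply h; exact I. Qed.

Lemma g_one_r (x : G) : gmul x gone = x.
Proof. destruct gG as (_ & _ & _ & _ & h & _). apply h; exact I. Qed.

Lemma g_inv_l (x : G) : gmul (ginv x) x = gone.
Proof. destruct gG as (_ & _ & _ & _ & _ & h). apply h; exact I. Qed.

Lemma g_inv_r (x : G) : gmul x (ginv x) = gone.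
Proof. destruct gG as (_ & _ & _ & _ & _ & h). apply h; exact I. Qed.

Lemma g_lcancel (a b c : G) : gmul a b = gmul a c -> b = c.
Proof.
  intros H. rewrite <- (g_one_l b), <- (g_one_l c), <- (g_inv_l a),
    <- !g_assoc, H; reflexivity.
Qed.

Lemma g_rcancel (a b c : G) : gmul b a = gmul c a -> b = c.
Proof.
  intros H. rewrite <- (g_one_r b), <- (g_one_r c), <- (g_inv_r a),
    !g_assoc, H; reflexivity.
Qed.

Lemma g_inv_unique (u v : G) : gmul u v = gone -> v = ginv u.
Proof. intros H. apply (g_lcancel u). rewrite H, g_inv_r; reflexivity. Qed.

Lemma g_mul_inv_eq1 (a b : G) : gmul a (ginv b) = gone -> a = b.
Proof.
  intros H. apply (g_rcancel (ginv b)). rewrite H, g_inv_r; reflexivity.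
Qed.

Lemma subgroup_criterion (S : G -> Prop) :
  S gone -> (forall x y, S x -> S y -> S (gmul x y)) ->
  (forall x, S x -> S (ginv x)) -> is_group_on S.
Proof.
  intros H1 HM HI. repeat split; auto; intros; auto using g_assoc, g_one_l,
    g_one_r, g_inv_l, g_inv_r.
Qed.

End GroupLaws.

Section CrossedModule.
Context {G1 G0 : grpops} {d : G1 -> G0} {act : G0 -> G1 -> G1}.
Hypothesis HG : is_xmod (Gstar d act).

Lemma G1_group : is_group_on (fun _ : G1 => True).
Proof. destruct HG as (h & _). exact h. Qed.

Lemma G0_group : is_group_on (fun _ : G0 => True).
Proof. destruct HG as (_ & h & _). exact h. Qed.

Lemma d_mul (a b : G1) : d (gmul a b) = gmul (d a) (d b).
Proof. destruct HG as (_ & _ & _ & h & _). apply h; exact I. Qed.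

Lemma act_id (a : G1) : act gone a = a.
Proof. destruct HG as (_ & _ & _ & _ & _ & h & _). apply h; exact I. Qed.

Lemma act_mul (x y : G0) (a : G1) : act (gmul x y) a = act x (act y a).
Proof. destruct HG as (_ & _ & _ & _ & _ & _ & h & _). apply h; exact I. Qed.

Lemma act_hom (x : G0) (a b : G1) :
  act x (gmul a b) = gmul (act x a) (act x b).
Proof. destruct HG as (_ & _ & _ & _ & _ & _ & _ & h & _). apply h; exact I. Qed.

Lemma d_equivariant (x : G0) (a : G1) :
  d (act x a) = gmul (gmul x (d a)) (ginv x).
Proof. destruct HG as (_ & _ & _ & _ & _ & _ & _ & _ & h & _). apply h; exact I. Qed.

Lemma peiffer (a b : G1) : act (d b) a = gmul (gmul b a) (ginv b).
Proof. destruct HG as (_ & _ & _ & _ & _ & _ & _ & _ & _ & h). apply h; exact I. Qed.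

Lemma act_one (x : G0) : act x gone = gone.
Proof.
  pose proof G1_group as g1.
  apply (g_lcancel g1 (act x gone)). rewrite <- act_hom, !(g_one_r g1).
  reflexivity.
Qed.

Lemma act_inv (x : G0) (a : G1) : act x (ginv a) = ginv (act x a).
Proof.
  pose proof G1_group as g1.
  apply (g_inv_unique g1). rewrite <- act_hom, (g_inv_r g1). apply act_one.
Qed.

Lemma d_one : d gone = gone.
Proof.
  pose proof G1_group as g1; pose proof G0_group as g0.
  apply (g_lcancel g0 (d gone)). rewrite <- d_mul, (g_one_r g1), (g_one_r g0).
  reflexivity.
Qed.

(* Peiffer identity: an element fixed by d b commutes with b; in particular
   H^0 lies in the centre of G1. *)
Lemma H0_central (a b : G1) : H0set act a -> gmul b a = gmul a b.
Proof.
  pose proof G1_group as g1. intros Ha.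
  apply (g_rcancel g1 (ginv b)).
  rewrite <- peiffer, Ha, <- (g_assoc g1), (g_inv_r g1), (g_one_r g1).
  reflexivity.
Qed.

Lemma d_H0_in_ZG (a : G1) : H0set act a -> ZGset act (d a).
Proof.
  pose proof G1_group as g1; pose proof G0_group as g0. intros Ha. split.
  - intros t.
    assert (Hconj : d a = gmul (gmul t (d a)) (ginv t))
      by (rewrite <- d_equivariant, Ha; reflexivity).
    rewrite Hconj at 1. rewrite <- (g_assoc g0), (g_inv_l g0), (g_one_r g0).
    reflexivity.
  - intros b. rewrite peiffer, <- (H0_central a b Ha), <- (g_assoc g1),
      (g_inv_r g1), (g_one_r g1).
    reflexivity.
Qed.

Lemma H0_subgroup : is_group_on (H0set act).
Proof.
  pose proof G1_group as g1. apply (subgroup_criterion g1).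
  - exact act_one.
  - intros a b Ha Hb x. rewrite act_hom, Ha, Hb. reflexivity.
  - intros a Ha x. rewrite act_inv, Ha. reflexivity.
Qed.

Lemma ZG_subgroup : is_group_on (ZGset act).
Proof.
  pose proof G0_group as g0. apply (subgroup_criterion g0).
  - split; [intros t; rewrite (g_one_l g0), (g_one_r g0); reflexivity|].
    exact act_id.
  - intros x y [Hx1 Hx2] [Hy1 Hy2]. split.
    + intros t. rewrite <- (g_assoc g0), Hy1, (g_assoc g0), Hx1, (g_assoc g0).
      reflexivity.
    + intros a. rewrite act_mul, Hy2, Hx2. reflexivity.
  - intros x [Hx1 Hx2]. split.
    + intros t. apply (g_lcancel g0 x).
      rewrite (g_assoc g0), (g_inv_r g0), (g_one_l g0), (g_assoc g0), Hx1,
        <- (g_assoc g0), (g_inv_r g0), (g_one_r g0).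
      reflexivity.
    + intros a. rewrite <- (Hx2 a) at 1. rewrite <- act_mul, (g_inv_l g0).
      apply act_id.
Qed.

Lemma ZNor_is_xmod : is_xmod (ZNor d act).
Proof.
  pose proof G1_group as g1; pose proof G0_group as g0.
  unfold is_xmod; simpl.
  split; [exact H0_subgroup|]. split; [exact ZG_subgroup|].
  split; [exact d_H0_in_ZG|].
  split; [intros a b _ _; apply d_mul|].
  split; [intros x a _ Ha; exact Ha|].
  split; [reflexivity|]. split; [reflexivity|]. split; [reflexivity|].
  split.
  - intros x a [Hx _] _.
    rewrite Hx, <- (g_assoc g0), (g_inv_r g0), (g_one_r g0). reflexivity.
  - intros a b Ha _.
    rewrite (H0_central a b Ha), <- (g_assoc g1), (g_inv_r g1), (g_one_r g1).
    reflexivity.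
Qed.

Lemma j0_in_Z0 (x : G0) : ZGset act x -> Z0set d act (@j0 G1 G0 act x).
Proof.
  pose proof G1_group as g1; pose proof G0_group as g0.
  intros [Hx1 Hx2]. unfold Z0set, j0, comm; simpl. split; [|split].
  - intros t. rewrite d_one, Hx1, <- (g_assoc g0 t x (ginv x)), (g_inv_r g0),
      (g_one_r g0), (g_inv_r g0).
    reflexivity.
  - intros a. rewrite Hx2, (g_inv_r g1). reflexivity.
  - intros s t. rewrite act_one, (g_one_l g1). reflexivity.
Qed.

Lemma j_is_morphism : is_xmod_morphism (ZNor d act) (Zstar d act) (@j1 G1) (@j0 G1 G0 act).
Proof.
  pose proof G1_group as g1.
  unfold is_xmod_morphism; simpl.
  split; [intros; exact I|]. split; [exact j0_in_Z0|].
  split; [intros a b _ _; reflexivity|].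
  split; [|split].
  - intros x y _ _. unfold j0; cbn; unfold Z0mul; cbn. f_equal.
    apply functional_extensionality; intros t.
    rewrite act_one, (g_one_l g1). reflexivity.
  - intros a Ha. unfold delta, j0, j1. f_equal.
    apply functional_extensionality; intros t.
    rewrite Ha, (g_inv_r g1). reflexivity.
  - intros x a [_ Hx] _. unfold j1, j0; simpl. rewrite Hx. reflexivity.
Qed.

Lemma j0_injective : inj_on (ZGset act) (@j0 G1 G0 act).
Proof. intros x y _ _ H. unfold j0 in H. injection H; auto. Qed.

(* An element whose derivation part  t |-> b (^t b)^{-1}  is trivial is
   invariant; this is where pi_1 and pi_0 are controlled. *)
Lemma H0_of_trivial_derivation (b : G1) :
  (fun t => gmul b (ginv (act t b))) = (fun _ => gone) -> H0set act b.
Proof.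
  pose proof G1_group as g1. intros Hb t.
  symmetry. apply (g_mul_inv_eq1 g1). exact (equal_f Hb t).
Qed.

Lemma j_iso_pi1 : induces_iso_pi1 (ZNor d act) (Zstar d act) (@j1 G1).
Proof.
  split; [intros x y _ _ H; exact H|].
  intros b _ Hb. simpl in Hb. unfold delta, Z0one in Hb.
  injection Hb as Hd Hder.
  exists b. split; [|split; [exact Hd|reflexivity]].
  exact (H0_of_trivial_derivation b Hder).
Qed.

Lemma j_mono_pi0 : induces_mono_pi0 (ZNor d act) (Zstar d act) (@j0 G1 G0 act).
Proof.
  pose proof G1_group as g1.
  intros x y _ [_ Hy] [b [_ Hb]]. simpl in Hb. unfold j0, delta, Z0mul in Hb.
  simpl in Hb. injection Hb as Hxy Hder.
  exists b. split; [|exact Hxy].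
  apply H0_of_trivial_derivation. apply functional_extensionality; intros t.
  pose proof (equal_f Hder t) as E. simpl in E.
  rewrite (g_one_r g1), Hy in E. symmetry. exact E.
Qed.

End CrossedModule.

Theorem mainTheorem11 (G1 G0 : grpops) (d : G1 -> G0) (act : G0 -> G1 -> G1)
  (HG : is_xmod (Gstar d act)) :
  (forall a, H0set act a -> ZGset act (d a)) /\
  is_xmod (ZNor d act) /\
  is_xmod_morphism (ZNor d act) (Zstar d act) (@j1 G1) (@j0 G1 G0 act) /\
  inj_on (H0set act) (@j1 G1) /\ inj_on (ZGset act) (@j0 G1 G0 act) /\
  induces_iso_pi1 (ZNor d act) (Zstar d act) (@j1 G1) /\
  induces_mono_pi0 (ZNor d act) (Zstar d act) (@j0 G1 G0 act).
Proof.
  split; [exact (d_H0_in_ZG HG)|].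
  split; [exact (ZNor_is_xmod HG)|].
  split; [exact (j_is_morphism HG)|].
  split; [intros a b _ _ H; exact H|].
  split; [exact j0_injective|].
  split; [exact (j_iso_pi1 HG)|].
  exact (j_mono_pi0 HG).
Qed.
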